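(* Let $m\ge 2$ and let $q$ be an $m\times m$ matrix each of whose entries is either $0$ or an indeterminate, where the indeterminates occurring in $q$ are pairwise distinct and algebraically independent over $F$ ($F=\mathbb{R}$ or $\mathbb{C}$), and suppose $\det q$ is an irreducible polynomial. Then for almost all assignments of values to the indeterminates satisfying the constraint $\det q=0$ — precisely, for every assignment with $\det q=0$ at which a certain polynomial $P$ not divisible by $\det q$ does not vanish — every nonzero vector $\psi\in F^m$ with $q\psi=0$ has $\psi_j\neq 0$ for every index $j=1,\dots,m$.
   Context: The matrix $q$ is the off-diagonal block of a chiral tight-binding Hamiltonian on a bipartite graph (rows indexed by white sites, columns by black sites, entry an independent indeterminate ''hopping term'' if the sites are adjacent, $0$ otherwise). A vector $\psi$ with $q\psi=0$ is a zero energy (null) state supported on one sublattice; the claim is that it has nonzero amplitude on every site of that sublattice. *)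

From mathcomp Require Import all_boot all_algebra.
From mathcomp Require Import reals complex.
From mathcomp Require Import mpoly.
Set Implicit Arguments. Unset Strict Implicit. Unset Printing Implicit Defensive.
Import GRing.Theory.
Local Open Scope ring_scope.

Definition irreducible_elt (R : idomainType) (p : R) : Prop :=
  [/\ p != 0, p \isn't a GRing.unit &
      forall a b : R, p = a * b -> a \is a GRing.unit \/ b \is a GRing.unit].

Definition divides (R : comNzRingType) (a b : R) : Prop := exists c : R, b = c * a.

(* The matrix q : 'M_m with entries in {mpoly F[n]}: the k-th indeterminate 'X_k
   sits at position pos k (pos injective, so the indeterminates are pairwise
   distinct); all other entries are 0. *)
Definition hop_mx {F : fieldType} {m n : nat} (pos : 'I_n -> 'I_m * 'I_m)
  : 'M[{mpoly F[n]}]_m :=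
  \matrix_(i < m, j < m)
    (if [pick k | pos k == (i, j)] is Some k then 'X_k else 0).

Definition null_state_claim (F : fieldType) : Prop :=
  forall (m n : nat) (pos : 'I_n -> 'I_m * 'I_m),
    (1 < m)%N ->
    injective pos ->
    irreducible_elt (\det (@hop_mx F m n pos)) ->
    exists P : {mpoly F[n]},
      ~ divides (\det (@hop_mx F m n pos)) P /\
      forall x : 'I_n -> F,
        (\det (@hop_mx F m n pos)).@[x] = 0 ->
        P.@[x] != 0 ->
        forall psi : 'cV[F]_m,
          psi != 0 ->
          map_mx (meval x) (@hop_mx F m n pos) *m psi = 0 ->
          forall j : 'I_m, psi j 0 != 0.

From mathcomp Require Import all_boot all_algebra.
From mathcomp Require Import reals complex.
From mathcomp Require Import mpoly.
From mathcomp Require Import perm zify.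
Set Implicit Arguments. Unset Strict Implicit. Unset Printing Implicit Defensive.
Import GRing.Theory.

(* Fix a row a of q. If the minor of q obtained by deleting row a and column j
   vanished identically, the Frobenius-Konig theorem would give an r x s zero
   block of q with r + s = m, r, s > 0; such a block factors det q into two
   determinants that both vanish at the origin, hence are non-units,
   contradicting irreducibility. So P := prod_j C_aj of the cofactors along row
   a is a nonzero polynomial. It is not a multiple of det q, since substituting
   0 for the variables of row a kills det q and fixes P. Finally, where P(x) is
   nonzero every minor with column j deleted is invertible, so q(x) psi = 0 and
   psi_j = 0 force psi = 0. *)

Section FrobeniusKonig.
Variables (I J : finType) (E : I -> J -> bool).
Implicit Types (A R : {set I}) (B S : {set J}).

Definition matching A B : Prop :=
  exists2 f : I -> J,
    {in A, forall i, (f i \in B) && E i (f i)} & {in A &, injective f}.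

Definition zero_block A B : Prop :=
  exists R S, [/\ R \subset A, S \subset B, #|R| + #|S| = #|A|.+1
                & {in R & S, forall i j, ~~ E i j}].

Lemma matching_extend A B i j :
  i \in A -> j \in B -> E i j -> matching (A :\ i) (B :\ j) -> matching A B.
Proof.
move=> iA jB Eij [f fAB f_inj].
have fD1 x : x \in A -> x != i -> f x \in B :\ j /\ E x (f x).
  by move=> xA xi; apply/andP/fAB; rewrite !inE xi xA.
exists (fun x => if x == i then j else f x) => [x xA | x y xA yA] /=.
  case: (eqVneq x i) => [->|xi]; first by rewrite jB.
  by have [/setD1P[_ ->] ->] := fD1 x xA xi.
case: (eqVneq x i) => [->|xi]; case: (eqVneq y i) => [->|yi] //.
- by move=> ej; have [] := fD1 y yA yi; rewrite -ej !inE eqxx.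
- by move=> ej; have [] := fD1 x xA xi; rewrite ej !inE eqxx.
by apply: f_inj; rewrite !inE ?xi ?yi.
Qed.

Lemma matching_glue A B R S : S \subset B ->
  matching R (B :\: S) -> matching (A :\: R) S -> matching A B.
Proof.
move=> sSB [f1 f1M f1_inj] [f2 f2M f2_inj].
have f1D x : x \in R -> f1 x \notin S.
  by move=> xR; have /andP[/setDP[]] := f1M x xR.
have f2S x : x \in A -> x \notin R -> f2 x \in S /\ E x (f2 x).
  by move=> xA xR; apply/andP/f2M; rewrite inE xR xA.
exists (fun x => if x \in R then f1 x else f2 x) => [x xA | x y xA yA] /=.
  case: ifP => xR; first by have /andP[/setDP[-> _] ->] := f1M x xR.
  by have [/(subsetP sSB) -> ->] := f2S x xA (negbT xR).
case: ifP => xR; case: ifP => yR.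
- exact: f1_inj.
- by move=> e; have := f1D x xR; rewrite e (f2S y yA (negbT yR)).1.
- by move=> e; have := f1D y yR; rewrite -e (f2S x xA (negbT xR)).1.
by apply: f2_inj; rewrite inE ?xR ?yR.
Qed.

Section GrowZeroBlock.
Variables (A : {set I}) (B : {set J}) (R : {set I}) (S : {set J}).
Hypotheses (sRA : R \subset A) (sSB : S \subset B) (cardRS : #|R| + #|S| = #|A|).
Hypothesis zeroRS : {in R & S, forall i j, ~~ E i j}.

Lemma zero_block_growr : zero_block R (B :\: S) -> zero_block A B.
Proof.
case=> R2 [S2 [sR2 sS2 cRS2 zRS2]]; move: sS2; rewrite subsetD => /andP[sS2 dS2].
exists R2, (S2 :|: S); split.
- exact: subset_trans sRA.
- by rewrite subUset sSB (subset_trans sS2) ?subsetDl.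
- by rewrite cardsU (disjoint_setI0 dS2) cards0; lia.
move=> i j iR2; rewrite inE => /orP[jS2|jS]; first exact: zRS2.
exact/zeroRS/jS/(subsetP sR2).
Qed.

Lemma zero_block_growl : zero_block (A :\: R) S -> zero_block A B.
Proof.
case=> R2 [S2 [sR2 sS2 cRS2 zRS2]]; move: sR2; rewrite subsetD => /andP[sR2 dR2].
exists (R2 :|: R), S2; split.
- by rewrite subUset sRA sR2.
- exact: subset_trans sSB.
- move: cRS2; rewrite cardsU (disjoint_setI0 dR2) cards0 cardsD (setIidPr sRA).
  have := subset_leq_card sRA; lia.
move=> i j; rewrite inE => /orP[iR2|iR] jS2; first exact: zRS2.
exact/zeroRS/(subsetP sS2).
Qed.

End GrowZeroBlock.

(* [j0] only serves to build the (empty) matching of the empty set. *)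
Lemma frobenius_konig (j0 : J) A B :
  #|A| = #|B| -> matching A B \/ zero_block A B.
Proof.
have [N] := ubnP #|A|; elim: N A B => // N IH A B ltAN eqAB.
have [/cards0_eq A0|A_gt0] := posnP #|A|.
  by left; exists (fun _ => j0) => i; rewrite A0 inE.
case: (boolP [exists i in A, exists j in B, E i j]) => [|noE]; last first.
  have [j jB] : exists j, j \in B by apply/card_gt0P; rewrite -eqAB.
  right; exists A, [set j]; split; rewrite ?sub1set ?cards1 ?addn1 //.
  move=> i j' iA /set1P ->; apply: contra noE => Eij.
  by apply/exists_inP; exists i => //; apply/exists_inP; exists j.
case/exists_inP=> i iA /exists_inP[j jB Eij].
have cAi : #|A :\ i| = #|A|.-1 by rewrite (cardsD1 i A) iA.
have cBj : #|B :\ j| = #|B|.-1 by rewrite (cardsD1 j B) jB.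
have [M|[R [S [sR sS cRS zRS]]]] := IH (A :\ i) (B :\ j) ltac:(lia) ltac:(lia).
  by left; apply: matching_extend M.
(* The zero block R x S splits the problem into the square subproblems
   R x (B :\: S) and (A :\: R) x S. *)
have sRA : R \subset A := subset_trans sR (subsetDl _ _).
have sSB : S \subset B := subset_trans sS (subsetDl _ _).
have := subset_leq_card sR; have := subset_leq_card sS; rewrite cAi cBj => leS leR.
have cBS : #|B :\: S| = #|B| - #|S| by rewrite cardsD (setIidPr sSB).
have cAR : #|A :\: R| = #|A| - #|R| by rewrite cardsD (setIidPr sRA).
have [MR|ZR] := IH R (B :\: S) ltac:(lia) ltac:(lia); last first.
  by right; apply: zero_block_growr ZR => //; lia.
have [ML|ZL] := IH (A :\: R) S ltac:(lia) ltac:(lia); last first.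
  by right; apply: zero_block_growl ZL => //; lia.
by left; apply: matching_glue MR ML.
Qed.

End FrobeniusKonig.

Lemma exists_bij_on_of_card_eq (I J : finType) (j0 : J) (A : {set I}) (B : {set J}) :
  #|A| = #|B| -> exists2 f : I -> J, {in A &, injective f} & f @: A = B.
Proof.
move=> eqAB; have [[f fAB f_inj]|[R [S [sRA sSB cRS zRS]]]] :=
  frobenius_konig (fun _ _ => true) j0 eqAB.
  exists f => //; apply/eqP; rewrite eqEcard card_in_imset // eqAB leqnn andbT.
  by apply/subsetP=> _ /imsetP[i iA ->]; have /andP[] := fAB i iA.
have := subset_leq_card sRA; have := subset_leq_card sSB.
case: (set_0Vmem R) => [R0|[i iR]]; first by rewrite R0 cards0 in cRS; lia.
case: (set_0Vmem S) => [S0|[j jS]]; last by have := zRS i j iR jS.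
by rewrite S0 cards0 in cRS; lia.
Qed.

Local Open Scope ring_scope.

Section ZeroBlockFactorization.
Variables (R : comNzRingType) (m : nat) (A : 'M[R]_m) (rs cs : {set 'I_m}).
Variable e : 'I_m -> 'I_m.
Hypotheses (A_block : {in rs & cs, forall i j, A i j = 0})
  (e_inj : {in cs &, injective e}) (e_onto : e @: cs = ~: rs).

(* Since A vanishes on rs x cs, the columns in cs only involve the rows e @: cs;
   the left factor keeps the other columns of A and puts the unit vector at
   row e k in column k of cs. *)
Definition zero_block_lfactor : 'M[R]_m :=
  \matrix_(i, k) (if k \in cs then (e k == i)%:R else A i k).

Definition zero_block_rfactor : 'M[R]_m :=
  \matrix_(k, j) (if k \in cs then (if j \in cs then A (e k) j else 0) else (k == j)%:R).

Lemma zero_block_factorization : A = zero_block_lfactor *m zero_block_rfactor.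
Proof.
have e_cs k : k \in cs -> e k \notin rs.
  by move=> kcs; rewrite -in_setC -e_onto imset_f.
apply/matrixP => i j; rewrite !mxE.
case: (boolP (j \in cs)) => jcs; last first.
  rewrite (bigD1 j) //= !mxE (negbTE jcs) eqxx mulr1 big1 ?addr0 // => k kj.
  by rewrite !mxE (negbTE jcs); case: ifP; rewrite ?mulr0 // (negbTE kj) mulr0.
have vanish i' k : k \notin cs -> zero_block_lfactor i' k * zero_block_rfactor k j = 0.
  by move=> kcs; rewrite !mxE (negbTE kcs); case: eqVneq jcs kcs => [->->|]; rewrite ?mulr0.
case: (boolP (i \in rs)) => irs.
  rewrite A_block // big1 // => k _; case: (boolP (k \in cs)) => kcs; last exact: vanish.
  rewrite !mxE kcs jcs; case: eqVneq => [eki|]; last by rewrite mul0r.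
  by have := e_cs k kcs; rewrite eki irs.
have /imsetP[k kcs ->] : i \in e @: cs by rewrite e_onto inE.
rewrite (bigD1 k) //= big1 ?addr0 => [|k' k'k]; first by rewrite !mxE kcs jcs eqxx mul1r.
case: (boolP (k' \in cs)) => k'cs; last exact: vanish.
rewrite !mxE k'cs jcs; case: eqVneq => [ek|]; rewrite ?mul0r //.
by move: k'k; rewrite (e_inj k'cs kcs ek) eqxx.
Qed.

End ZeroBlockFactorization.

Lemma det_row_eq0 (R : comNzRingType) m (A : 'M[R]_m) i :
  (forall j, A i j = 0) -> \det A = 0.
Proof. by move=> Ai0; rewrite (expand_det_row _ i) big1 // => j _; rewrite Ai0 mul0r. Qed.

Lemma zero_block_det_not_irreducible (R : idomainType) (K : comUnitRingType)
    (phi : {rmorphism R -> K}) m (A : 'M[R]_m) (rs cs : {set 'I_m}) :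
  (#|rs| + #|cs| = m)%N -> (0 < #|rs|)%N -> (0 < #|cs|)%N ->
  {in rs & cs, forall i j, A i j = 0} -> (forall i j, phi (A i j) = 0) ->
  ~ irreducible_elt (\det A).
Proof.
move=> card_rs_cs /card_gt0P[i irs] /card_gt0P[k kcs] A_block phiA0 [_ _ irr].
have card_cs : #|cs| = #|~: rs| by have := cardsC rs; rewrite card_ord; lia.
have [e e_inj e_onto] := exists_bij_on_of_card_eq i card_cs.
have phi_unit_neq0 (u : R) : u \is a GRing.unit -> phi u != 0.
  by move=> /(rmorph_unit phi); apply: contraTneq => ->; rewrite unitr0.
set L := zero_block_lfactor A cs e; set U := zero_block_rfactor A cs e.
have detA : \det A = \det L * \det U.
  by rewrite {1}(zero_block_factorization A_block e_inj e_onto) det_mulmx.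
have phiL : phi (\det L) = 0.
  rewrite -det_map_mx; apply: (@det_row_eq0 _ _ _ i) => j; rewrite !mxE.
  case: ifP => jcs; last exact: phiA0.
  rewrite rmorph_nat; case: eqVneq => // eji.
  by have := imset_f e jcs; rewrite e_onto eji inE irs.
have phiU : phi (\det U) = 0.
  rewrite -det_map_mx; apply: (@det_row_eq0 _ _ _ k) => j; rewrite !mxE kcs.
  by case: ifP => _; [exact: phiA0 | exact: rmorph0].
by case: (irr _ _ detA) => /phi_unit_neq0; rewrite ?phiL ?phiU eqxx.
Qed.

Lemma null_vector_eq0 (K : fieldType) m (M : 'M[K]_m) (a j : 'I_m) (psi : 'cV_m) :
  cofactor M a j != 0 -> M *m psi = 0 -> psi j 0 = 0 -> psi = 0.
Proof.
rewrite /cofactor mulf_eq0 signr_eq0 /= -unitfE -unitmxE => minor_unit Mpsi0 psij0.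
have minor_psi0 : row' a (col' j M) *m row' j psi = 0.
  apply/matrixP => c k; rewrite (ord1 k) !mxE.
  have := congr1 (fun B : 'cV_m => B (lift a c) 0) Mpsi0.
  rewrite !mxE (bigD1_ord j) //= psij0 mulr0 add0r => Mpsi_c.
  by rewrite -[RHS]Mpsi_c; apply: eq_bigr => d _; rewrite !mxE.
have psi'0 : row' j psi = 0 by rewrite -(mulKmx minor_unit (row' j psi)) minor_psi0 mulmx0.
apply/matrixP => i k; rewrite (ord1 k) mxE; case: (unliftP j i) => [c ->|->] //.
by have := congr1 (fun B : 'cV_m.-1 => B c 0) psi'0; rewrite !mxE.
Qed.

Section HoppingMatrix.
Variables (F : fieldType) (m n : nat) (pos : 'I_n -> 'I_m * 'I_m).
Local Notation q := (@hop_mx F m n pos).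

Lemma meval_hop_mx (x : 'I_n -> F) i j :
  meval x (q i j) = if [pick k | pos k == (i, j)] is Some k then x k else 0.
Proof. by rewrite mxE; case: pickP => [k _|_]; rewrite ?mevalXU ?meval0. Qed.

Lemma hop_mx_neq0 i j : q i j != 0 -> exists k, pos k = (i, j).
Proof. by rewrite mxE; case: pickP => [k /eqP pk _|_]; [exists k | rewrite eqxx]. Qed.

Lemma cofactor_hop_mx_neq0_of_matching a j :
  matching (fun i c => q i c != 0) [set~ a] [set~ j] -> cofactor q a j != 0.
Proof.
case=> f fM f_inj.
have fM' c : f (lift a c) \in [set~ j] /\ q (lift a c) (f (lift a c)) != 0.
  by apply/andP/fM; rewrite !inE eq_sym neq_lift.
pose g c := odflt c (unlift j (f (lift a c))).
have gE c : lift j (g c) = f (lift a c).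
  rewrite /g; have [|c' -> ->] := @unlift_some _ j (f (lift a c)); last by [].
  by have [] := fM' c; rewrite !inE eq_sym.
have g_inj : injective g.
  move=> c1 c2 /(congr1 (lift j)); rewrite !gE => /f_inj.
  by rewrite !inE ![lift _ _ == a]eq_sym !neq_lift => /(_ isT isT) /lift_inj.
(* Setting exactly the matched variables to 1 turns the minor into a
   permutation matrix. *)
pose x k : F := [exists c, pos k == (lift a c, f (lift a c))]%:R.
have minor_x : map_mx (meval x) (row' a (col' j q)) = perm_mx (perm g_inj).
  apply/matrixP => c1 c2; rewrite 3!mxE meval_hop_mx !mxE permE.
  case: pickP => [k /eqP pk | none].
    rewrite /x pk; congr (nat_of_bool _)%:R; apply/existsP/eqP => [[c]|<-].
      rewrite xpair_eqE => /andP[/eqP/lift_inj <- /eqP].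
      by rewrite -gE => /lift_inj.
    by exists c1; rewrite gE.
  case: eqVneq => // gc.
  have [_] := fM' c1; rewrite -gE gc => /hop_mx_neq0[k pk].
  by have := none k; rewrite pk eqxx.
apply/eqP => cof0.
have := congr1 (meval x) cof0; rewrite -cofactor_map_mx meval0 /cofactor.
by rewrite -map_col' -map_row' minor_x det_perm => /eqP; rewrite mulf_eq0 !signr_eq0.
Qed.

Lemma cofactor_hop_mx_neq0 a j : irreducible_elt (\det q) -> cofactor q a j != 0.
Proof.
move=> irr; have cardC : #|[set~ a]| = #|[set~ j]| by rewrite !cardsC1.
have [|[rs [cs [sR sS cRS zRS]]]] := frobenius_konig (fun i c => q i c != 0) j cardC.
  exact: cofactor_hop_mx_neq0_of_matching.
have := subset_leq_card sR; have := subset_leq_card sS.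
move: cRS; rewrite !cardsC1 card_ord => cRS leS leR.
have [rs_gt0 cs_gt0] : (0 < #|rs|)%N /\ (0 < #|cs|)%N by lia.
exfalso; apply: (zero_block_det_not_irreducible
  (phi := meval (fun=> 0)) _ rs_gt0 cs_gt0) irr.
- by rewrite cRS prednK // (leq_ltn_trans _ (ltn_ord a)).
- by move=> i c irs ccs; apply/eqP; have := zRS i c irs ccs; rewrite negbK.
by move=> i c /=; rewrite meval_hop_mx; case: pickP.
Qed.

(* Substituting 0 for the variables of row a kills det q but fixes every
   cofactor along row a. *)
Definition zero_row_subst (a : 'I_m) : n.-tuple {mpoly F[n]} :=
  [tuple if (pos k).1 == a then 0 else 'X_k | k < n].

Lemma comp_hop_mx_zero_row a i c :
  q i c \mPo zero_row_subst a = if i == a then 0 else q i c.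
Proof.
rewrite mxE; case: pickP => [k /eqP pk|_]; last by rewrite comp_mpoly0; case: ifP.
by rewrite comp_mpolyXU -tnth_nth tnth_mktuple pk.
Qed.

Lemma hop_mx_det_ndvd_prod_cofactor a :
  irreducible_elt (\det q) -> ~ divides (\det q) (\prod_j cofactor q a j).
Proof.
move=> irr [c dvd]; set P := \prod_j cofactor q a j in dvd.
have P_neq0 : P != 0 by apply/prodf_neq0 => j _; apply: cofactor_hop_mx_neq0.
have substP : P \mPo zero_row_subst a = P.
  rewrite rmorph_prod; apply: eq_bigr => j _; rewrite -cofactor_map_mx /cofactor.
  congr (_ * \det _); apply/matrixP => i c'.
  by rewrite 3!mxE /= comp_hop_mx_zero_row eq_sym (negbTE (neq_lift a i)) !mxE.
have := congr1 (comp_mpoly (zero_row_subst a)) dvd.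
rewrite substP rmorphM -det_map_mx (@det_row_eq0 _ _ _ a) ?mulr0 => [|j].
  by move/eqP: P_neq0.
by rewrite mxE /= comp_hop_mx_zero_row eqxx.
Qed.

End HoppingMatrix.

Lemma null_state_claim_field (F : fieldType) : null_state_claim F.
Proof.
move=> m n pos m_gt1 _ irr; pose a : 'I_m := Ordinal (ltnW m_gt1).
exists (\prod_j cofactor (hop_mx pos) a j).
split; first exact: hop_mx_det_ndvd_prod_cofactor.
move=> x _ Px_neq0 psi psi_neq0 qpsi0 j; apply: contra psi_neq0 => /eqP psij0.
apply/eqP/(null_vector_eq0 (a := a) (j := j) _ qpsi0 psij0).
by move: Px_neq0; rewrite rmorph_prod => /prodf_neq0/(_ j isT); rewrite -cofactor_map_mx.
Qed.

Theorem mainTheorem2 (R : realType) :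
  null_state_claim R /\ null_state_claim (complex R).
Proof. by split; apply: null_state_claim_field. Qed.
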